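(* Let $\mathcal G$ be a DAG with vertex set $\mathbf V$, $\mathbf Y\subseteq\mathbf V$, $\boldsymbol\alpha$ a set of directed edges live for $\mathbf Y$, and $\eta_{\mathfrak a_{\boldsymbol\alpha}}$ an edge intervention that is node consistent for $\mathbf Y$. Then $p(\mathbf Y(\mathfrak a_{\boldsymbol\alpha}))$ is identified as a functional of $p(\mathbf V)$ under the single world model (SWM) for $\mathcal G$, via the extended g-formula for the response to the induced node intervention: $$p(\mathbf Y(\mathfrak a_{\boldsymbol\alpha})=\mathbf v_{\mathbf Y})=\sum_{\mathbf v_{\mathbf V\setminus\mathbf Y}}\prod_{V\in\mathbf V}p\big(\mathbf v_V\mid(\mathbf a_{\boldsymbol\alpha})_{\mathrm{pa}(V)\cap\mathbf A},\mathbf v_{\mathrm{pa}(V)\setminus\mathbf A}\big),$$ where $\mathbf A$ is the set of sources of edges in $\boldsymbol\alpha$.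
   Context: Let $\mathcal G$ be a DAG with finite vertex set $\mathbf V$; each vertex is a random variable with state space $\mathfrak X_V$; $\mathfrak X_{\mathbf A}=\prod_{A\in\mathbf A}\mathfrak X_A$; $\mathbf v_{\mathbf A}$ is restriction; $\mathrm{pa}(V)$ are parents. A causal structure is a collection of one-step potential outcomes $V(\mathbf b)$, $\mathbf b\in\mathfrak X_{\mathrm{pa}(V)}$, with a joint distribution; node-intervention responses are defined recursively by $V(\mathbf a)=V(\mathbf a_{\mathrm{pa}(V)\cap\mathbf A},\{W(\mathbf a):W\in\mathrm{pa}(V)\setminus\mathbf A\})$, and $\mathbf A=\emptyset$ gives the observed variables with distribution $p(\mathbf V)$. The single world model (SWM) of $\mathcal G$: for every $\mathbf v\in\mathfrak X_{\mathbf V}$, $\{V(\mathbf v_{\mathrm{pa}(V)}):V\in\mathbf V\}$ are mutually independent. Identified under a model = equal for any two causal structures in the model with the same $p(\mathbf V)$. Edge interventions: for an edge set $\boldsymbol\alpha$, $\mathfrak a\in\mathfrak X_{\boldsymbol\alpha}=\prod_{(AB)\in\boldsymbol\alpha}\mathfrak X_A$ assigns each edge a value of its source; $V(\mathfrak a)=V(\mathfrak a_{\{(WV)\in\boldsymbol\alpha\}},\{W(\mathfrak a):W\in\mathrm{pa}(V),(WV)\notin\boldsymbol\alpha\})$ recursively. A directed path $\beta$ with sink in $\mathbf Y$ is relevant for $\mathbf Y$ given $\boldsymbol\alpha$ if no element of $\boldsymbol\alpha$ is a subpath of $\beta$ except possibly its first edge; $\mathrm{rel}_{\mathcal G}(\mathbf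 Y\mid\boldsymbol\alpha)$ is their set; $\boldsymbol\alpha$ is live for $\mathbf Y$ if each edge in it is the first edge of some relevant path. $\boldsymbol\alpha$ (live for $\mathbf Y$) is consistent for $\mathbf Y$ if for every vertex $A$, the set of first edges of relevant paths with source $A$ is disjoint from or contained in $\boldsymbol\alpha$. $\eta_{\mathfrak a}$ is node consistent for $\mathbf Y$ if $\boldsymbol\alpha$ is live and consistent for $\mathbf Y$ and all edges of $\boldsymbol\alpha$ with a common source get the same value; the induced node intervention sets each source $A$ to that common value, giving $\mathbf a_{\boldsymbol\alpha}\in\mathfrak X_{\mathbf A}$. *)

From HB Require Import structures.
From mathcomp Require Import all_boot all_order all_algebra.
From mathcomp Require Import reals.
Set Implicit Arguments. Unset Strict Implicit. Unset Printing Implicit Defensive.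
Import Order.TTheory GRing.Theory Num.Theory.
Local Open Scope ring_scope.

Section CausalDefs.
Variables (V : finType) (pa : V -> {set V}) (X : V -> finType).

Definition edge : rel V := fun u w => u \in pa w.

Definition acyclic : Prop := forall u w, edge u w -> ~~ connect edge w u.

Definition asg := {dffun forall v : V, X v}.

Definition agree (S : {set V}) (x y : asg) : bool := [forall v in S, x v == y v].

(* Directed path (x, y, p_1, ..., p_k): first edge (x,y); every later edge is
   an edge of G not in alpha; sink last y p in Y. *)
Definition later_step (alpha : {set V * V}) : rel V :=
  fun u w => edge u w && ((u, w) \notin alpha).

Definition relevant_first (alpha : {set V * V}) (Y : {set V}) (x y : V) : Prop :=
  exists p : seq V, [&& edge x y, path (later_step alpha) y p & last y p \in Y].

Definition live (alpha : {set V * V}) (Y : {set V}) : Prop :=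
  forall e, e \in alpha -> relevant_first alpha Y e.1 e.2.

Definition consistent (alpha : {set V * V}) (Y : {set V}) : Prop :=
  live alpha Y /\
  forall A : V,
    (forall B, relevant_first alpha Y A B -> (A, B) \in alpha) \/
    (forall B, relevant_first alpha Y A B -> (A, B) \notin alpha).

Definition node_consistent (alpha : {set V * V}) (Y : {set V})
    (a : forall e : V * V, X e.1) : Prop :=
  [/\ live alpha Y, consistent alpha Y &
      forall A B C, (A, B) \in alpha -> (A, C) \in alpha -> a (A, B) = a (A, C)].

Definition sources (alpha : {set V * V}) : {set V} := [set e.1 | e in alpha].

Variable R : realType.

Definition is_pmf (O : finType) (P : {ffun O -> R}) : Prop :=
  (forall w, 0 <= P w) /\ \sum_w P w = 1.

Definition prob (O : finType) (P : {ffun O -> R}) (E : pred O) : R :=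
  \sum_(w | E w) P w.

(* A causal structure on a (finite) probability space O: for each outcome w,
   F w v b is the one-step potential outcome v(b_pa(v)); it only depends on
   the parent values b_pa(v). *)
Definition causal_structure (O : finType) (P : {ffun O -> R})
    (F : O -> forall v : V, asg -> X v) : Prop :=
  is_pmf P /\ forall w v b b', agree (pa v) b b' -> F w v b = F w v b'.

Definition SWM (O : finType) (P : {ffun O -> R})
    (F : O -> forall v : V, asg -> X v) : Prop :=
  forall (x : asg) (S : {set V}) (c : asg),
    prob P (fun w => [forall v in S, F w v x == c v]) =
    \prod_(v in S) prob P (fun w => F w v x == c v).

(* observed variables: the solution of the recursive equations v = v(pa(v)) *)
Definition obs_resp (f : forall v : V, asg -> X v) (x : asg) : bool :=
  [forall v, x v == f v x].

Definition edge_mix (alpha : {set V * V}) (a : forall e : V * V, X e.1)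
    (v : V) (x : asg) : asg :=
  @finfun V X (fun u => if (u, v) \in alpha then a (u, v) else x u).

Definition edge_resp (alpha : {set V * V}) (a : forall e : V * V, X e.1)
    (f : forall v : V, asg -> X v) (x : asg) : bool :=
  [forall v, x v == f v (edge_mix alpha a v x)].

Definition pV (O : finType) (P : {ffun O -> R})
    (F : O -> forall v : V, asg -> X v) (v : asg) : R :=
  prob P (fun w => [exists x, obs_resp (F w) x && (x == v)]).

Definition pY_edge (O : finType) (P : {ffun O -> R})
    (F : O -> forall v : V, asg -> X v) (alpha : {set V * V})
    (a : forall e : V * V, X e.1) (Y : {set V}) (v : asg) : R :=
  prob P (fun w => [exists x, edge_resp alpha a (F w) x && agree Y x v]).

Definition marg (q : asg -> R) (S : {set V}) (u : asg) : R :=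
  \sum_(x | agree S x u) q x.

Definition cond (q : asg -> R) (V0 : V) (u : asg) : R :=
  marg q (V0 |: pa V0) u / marg q (pa V0) u.

Definition node_mix (A : {set V}) (aN : asg) (V0 : V) (v : asg) : asg :=
  @finfun V X (fun u => if (u \in pa V0) && (u \in A) then aN u else v u).

Definition gformula (q : asg -> R) (A : {set V}) (aN : asg) (Y : {set V})
    (v : asg) : R :=
  \sum_(w : asg | agree Y w v) \prod_(V0 : V) cond q V0 (node_mix A aN V0 w).

End CausalDefs.

From HB Require Import structures.
From mathcomp Require Import all_boot all_order all_algebra.
From mathcomp Require Import reals.
Set Implicit Arguments. Unset Strict Implicit. Unset Printing Implicit Defensive.
Import Order.TTheory GRing.Theory Num.Theory.
Local Open Scope ring_scope.

(* Under the single world model the one-step potential outcomes are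
   independent, so on an ancestral set the observed law factorises into the
   one-step laws P(V(b) = c); comparing an ancestral set with and without its
   maximal vertex v shows p(v | pa(v)) = P(V(b) = v) for b the parent values
   (positivity keeps the conditionals meaningful).  The response to the induced
   node intervention is the unique solution of the structural equations with
   the sources clamped, and its law is the product of one-step laws: the
   extended g-formula.  Finally, by consistency of alpha, an edge into a
   vertex with a relevant path to Y is intervened exactly when its source is a
   source of alpha, where it carries the induced node value; so edge and node
   responses agree on Y. *)

Section Dag.
Variables (V : finType) (pa : V -> {set V}).
Hypothesis HG : acyclic pa.

Definition ancestors (v : V) : {set V} := [set u | connect (edge pa) u v].

Definition anc_rank (v : V) : nat := #|ancestors v|.

Lemma anc_rank_lt u v : u \in pa v -> (anc_rank u < anc_rank v)%N.
Proof.
move=> uv; apply: proper_card; apply/properP; split.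
- apply/subsetP=> x; rewrite !inE => xu; exact: connect_trans xu (connect1 uv).
- by exists v; rewrite !inE ?connect0 //; exact: HG uv.
Qed.

Lemma dag_ind (P : V -> Prop) :
  (forall v, (forall u, u \in pa v -> P u) -> P v) -> forall v, P v.
Proof.
move=> IH v; have [n] := ubnP (anc_rank v); elim: n v => // n IHn v lt_v.
apply: IH => u /anc_rank_lt lt_uv; apply: IHn; exact: leq_trans lt_uv lt_v.
Qed.

Lemma mem_ancestors v : v \in ancestors v.
Proof. by rewrite inE connect0. Qed.

Lemma anc_rank_gt0 v : (0 < anc_rank v)%N.
Proof. by apply/card_gt0P; exists v; exact: mem_ancestors. Qed.

Lemma notin_pa v : v \notin pa v.
Proof. by apply/negP=> vv; move: (HG vv); rewrite connect0. Qed.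

Definition ancestral (S : {set V}) : Prop :=
  forall u w, u \in S -> w \in pa u -> w \in S.

Lemma ancestral_ancestors v : ancestral (ancestors v).
Proof. by move=> u w; rewrite !inE => uv wu; exact: connect_trans (connect1 wu) uv. Qed.

Lemma ancestral_strict_ancestors v : ancestral (ancestors v :\ v).
Proof.
move=> u w /setD1P[_ anc_u] wu; rewrite in_setD1 (ancestral_ancestors anc_u wu) andbT.
by apply: contraTneq anc_u => <-; rewrite inE; exact: HG wu.
Qed.

Lemma pa_sub_strict_ancestors v : pa v \subset ancestors v :\ v.
Proof.
apply/subsetP => u uv; rewrite in_setD1 inE connect1 // andbT.
by apply: contraTneq uv => ->; exact: notin_pa.
Qed.

End Dag.

Section Assignments.
Variables (V : finType) (X : V -> finType).

Lemma agreeP (S : {set V}) (x y : asg X) :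
  reflect (forall v, v \in S -> x v = y v) (agree S x y).
Proof. by apply: (iffP forall_inP) => H v vS; apply/eqP/H. Qed.

Definition patch (S : {set V}) (x y : asg X) : asg X :=
  @finfun V X (fun v => if v \in S then x v else y v).

Lemma patchE S x y v : patch S x y v = if v \in S then x v else y v.
Proof. by rewrite ffunE. Qed.

End Assignments.

Section StructuralEquations.
Variables (V : finType) (pa : V -> {set V}) (X : V -> finType).
Hypothesis HG : acyclic pa.

Definition parent_determined (g : forall v, asg X -> X v) : Prop :=
  forall v x y, agree (pa v) x y -> g v x = g v y.

Lemma parent_determined_comp (f : forall v, asg X -> X v) (m : V -> asg X -> asg X) :
  parent_determined f ->
  (forall v x y, agree (pa v) x y -> agree (pa v) (m v x) (m v y)) ->
  parent_determined (fun v x => f v (m v x)).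
Proof. by move=> Hf Hm v x y /Hm /Hf. Qed.

Variables (g : forall v, asg X -> X v).
Hypothesis Hg : parent_determined g.

Lemma obs_resp_uniq x y : obs_resp g x -> obs_resp g y -> x = y.
Proof.
move=> /forallP Hx /forallP Hy; apply/ffunP; apply: (dag_ind HG) => v IH.
by rewrite (eqP (Hx v)) (eqP (Hy v)); apply: Hg; apply/agreeP.
Qed.

Lemma obs_resp_exists (x0 : asg X) : exists x, obs_resp g x.
Proof.
pose step (x : asg X) : asg X := @finfun V X (fun v => g v x).
have stable k v : (anc_rank pa v <= k)%N ->
    forall m, (k <= m)%N -> iter m step x0 v = iter k step x0 v.
  elim: k v => [|k IH] v rk_v; first by rewrite leqNgt anc_rank_gt0 in rk_v.
  case=> // m km; rewrite /= !ffunE; apply: Hg; apply/agreeP => u uv.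
  by apply: IH => //; rewrite -ltnS; exact: leq_trans (anc_rank_lt HG uv) rk_v.
exists (iter #|V| step x0); apply/forallP => v.
have := stable #|V| v (max_card _) #|V|.+1 (leqnSn _).
by rewrite /= ffunE => ->.
Qed.

Lemma solution_agree (S : {set V}) (x z : asg X) :
  ancestral pa S -> obs_resp g x -> [forall u in S, g u z == z u] -> agree S x z.
Proof.
move=> HS /forallP Hx /forall_inP Hz; apply/agreeP.
apply: (dag_ind HG) => u IH uS.
rewrite (eqP (Hx u)) -(eqP (Hz u uS)); apply: Hg; apply/agreeP => w wu.
exact: IH wu (HS _ _ uS wu).
Qed.

End StructuralEquations.

Lemma agree_setU1 (V : finType) (X : V -> finType) v (S : {set V}) (x y : asg X) :
  agree (v |: S) x y = (x v == y v) && agree S x y.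
Proof.
apply/agreeP/andP => [H|[/eqP xyv /agreeP H] w].
  by split; [apply/eqP/H/setU11 | apply/agreeP => w wS; apply/H/setU1r].
by case/setU1P => [->|/H].
Qed.

Lemma sum_prob_disjoint (R : realType) (O : finType) (P : {ffun O -> R})
    (I : finType) (C : pred I) (E : I -> pred O) :
  (forall o i j, C i -> C j -> E i o -> E j o -> i = j) ->
  \sum_(i | C i) prob P (E i) = prob P (fun o => [exists i, C i && E i o]).
Proof.
move=> disjE; rewrite /prob; under eq_bigr do rewrite big_mkcond /=.
rewrite exchange_big /= [RHS]big_mkcond /=; apply: eq_bigr => o _.
case: existsP => [[i /andP[Ci Eio]]|noE].
- rewrite (bigD1 i) //= Eio big1 ?addr0 // => j /andP[Cj ji]; case: ifP => // Ejo.
  by rewrite (disjE _ _ _ Cj Ci Ejo Eio) eqxx in ji.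
- rewrite big1 // => j Cj; case: ifP => // Ejo.
  by case: noE; exists j; rewrite Cj.
Qed.

Lemma eq_gformula (V : finType) (pa : V -> {set V}) (X : V -> finType) (R : realType)
    (q1 q2 : asg X -> R) (A : {set V}) (aN : asg X) (Y : {set V}) (v : asg X) :
  q1 =1 q2 -> gformula pa q1 A aN Y v = gformula pa q2 A aN Y v.
Proof.
move=> eq_q; have eq_marg S u : marg q1 S u = marg q2 S u by apply: eq_bigr.
by apply: eq_bigr => w _; apply: eq_bigr => u _; rewrite /cond !eq_marg.
Qed.

Section RelevantPaths.
Variables (V : finType) (pa : V -> {set V}) (alpha : {set V * V}) (Y : {set V}).

Definition relevant (r : V) : Prop :=
  exists p, path (later_step pa alpha) r p && (last r p \in Y).

Lemma relevant_mem y : y \in Y -> relevant y.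
Proof. by exists [::]. Qed.

Lemma relevant_parent r u :
  relevant r -> u \in pa r -> (u, r) \notin alpha -> relevant u.
Proof.
by case=> p /andP[pr lp] ur nur; exists (r :: p); rewrite /= pr lp /later_step /edge ur nur.
Qed.

Lemma source_relevant_parent r u : consistent pa alpha Y ->
  relevant r -> u \in pa r -> (u \in sources alpha) = ((u, r) \in alpha).
Proof.
move=> [Hlive Hcons] [p /andP[pr lp]] ur.
apply/imsetP/idP => [[[u' b] ub /= eu]|ura]; last by exists (u, r).
subst u'; have rel_ur : relevant_first pa alpha Y u r by exists p; rewrite /edge ur pr lp.
by case: (Hcons u) => [/(_ r rel_ur) //|/(_ b (Hlive _ ub))]; rewrite ub.
Qed.

End RelevantPaths.

Section SingleWorldModel.
Variables (V : finType) (pa : V -> {set V}) (X : V -> finType) (R : realType).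
Hypothesis HG : acyclic pa.
Variables (O : finType) (P : {ffun O -> R}) (F : O -> forall v : V, asg X -> X v).
Hypothesis Hcs : causal_structure pa P F.
Hypothesis Hsw : SWM P F.

Lemma F_parent_determined o : parent_determined pa (F o).
Proof. by move=> v x y; exact: Hcs.2. Qed.

Definition pot_prob (v : V) (x : asg X) (c : X v) : R := prob P (fun o => F o v x == c).
Arguments pot_prob : clear implicits.

Lemma pot_prob_agree v x y c : agree (pa v) x y -> pot_prob v x c = pot_prob v y c.
Proof. by move=> xy; apply: eq_bigl => o; rewrite (F_parent_determined o xy). Qed.

Definition solves_on (S : {set V}) (z : asg X) (o : O) : bool :=
  [forall u in S, F o u z == z u].

Lemma prob_solves_on_setU1 (S : {set V}) (v : V) (z : asg X) : v \notin S ->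
  prob P (solves_on (v |: S) z) = pot_prob v z (z v) * prob P (solves_on S z).
Proof.
move=> vS; rewrite /solves_on !Hsw (bigD1 v) ?setU11 //=; congr (_ * _).
apply: eq_bigl => u; rewrite !inE; case: eqVneq => [->|/=]; last by rewrite andbT.
by rewrite (negbTE vS).
Qed.

Lemma marg_pV_event (T : {set V}) (u : asg X) :
  marg (pV P F) T u = prob P (fun o => [exists x, obs_resp (F o) x && agree T x u]).
Proof.
rewrite /marg /pV sum_prob_disjoint; last first.
  move=> o x y _ _ /existsP[x' /andP[Hx' /eqP <-]] /existsP[y' /andP[Hy' /eqP <-]].
  exact: (obs_resp_uniq HG (F_parent_determined o) Hx' Hy').
apply: eq_bigl => o; apply/existsP/existsP.
- by case=> x /andP[xT /existsP[y /andP[Hy /eqP yx]]]; exists y; rewrite Hy yx.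
- by case=> x /andP[Hx xT]; exists x; rewrite xT; apply/existsP; exists x; rewrite Hx eqxx.
Qed.

(* The observed vertices in an ancestral set S are a fixed point of the
   equations on S alone, so they may be read off any z with the right values
   on S; those outside S are then pinned to u to make z unique. *)
Lemma prob_solution_ancestral (S T : {set V}) (u : asg X) :
  ancestral pa S -> T \subset S ->
  prob P (fun o => [exists x, obs_resp (F o) x && agree T x u]) =
  \sum_(z | agree T z u && agree (~: S) z u) prob P (solves_on S z).
Proof.
move=> HS /subsetP TS; rewrite sum_prob_disjoint; last first.
  move=> o z z' /andP[_ /agreeP zS] /andP[_ /agreeP z'S] Hz Hz'.
  have [x Hx] := obs_resp_exists HG (F_parent_determined o) u.
  have /agreeP xz := solution_agree HG (F_parent_determined o) HS Hx Hz.
  have /agreeP xz' := solution_agree HG (F_parent_determined o) HS Hx Hz'.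
  apply/ffunP => b; case: (boolP (b \in S)) => bS; first by rewrite -xz // -xz'.
  by rewrite zS ?inE // z'S ?inE.
apply: eq_bigl => o; apply/existsP/existsP.
- case=> x /andP[/forallP Hx /agreeP xT]; exists (patch S x u); apply/andP; split.
    apply/andP; split; apply/agreeP => b; rewrite patchE; first by move=> bT; rewrite TS ?xT.
    by rewrite inE => /negbTE ->.
  apply/forall_inP => b bS; rewrite [X in _ == X]patchE bS (eqP (Hx b)) eq_sym.
  by apply/eqP/(F_parent_determined o); apply/agreeP => c cb; rewrite patchE (HS _ _ bS cb).
- case=> z /andP[/andP[/agreeP zT _] Hz].
  have [x Hx] := obs_resp_exists HG (F_parent_determined o) u.
  have /agreeP xz := solution_agree HG (F_parent_determined o) HS Hx Hz.
  by exists x; rewrite Hx; apply/agreeP => b bT; rewrite xz ?TS ?zT.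
Qed.

Hypothesis Hpos : forall v, 0 < pV P F v.

Lemma marg_pV_gt0 (T : {set V}) (u : asg X) : 0 < marg (pV P F) T u.
Proof.
rewrite /marg (bigD1 u) /=; last exact/agreeP.
rewrite ltr_wpDr // sumr_ge0 // => x _; apply: sumr_ge0 => o _; exact: Hcs.1.1.
Qed.

Lemma cond_pot_prob (v : V) (u : asg X) : cond pa (pV P F) v u = pot_prob v u (u v).
Proof.
set S := ancestors pa v :\ v.
have vS : v \notin S by rewrite setD11.
have HS : ancestral pa S by exact: ancestral_strict_ancestors.
have paS : pa v \subset S by exact: pa_sub_strict_ancestors.
have HvS : ancestral pa (v |: S).
  by rewrite setD1K ?mem_ancestors //; exact: ancestral_ancestors.
have vpaS : v |: pa v \subset v |: S by rewrite setUS.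
have agree_idx z : agree (v |: pa v) z u && agree (~: (v |: S)) z u
    = agree (pa v) z u && agree (~: S) z u.
  have -> : ~: S = v |: ~: (v |: S).
    by apply/setP => b; rewrite !inE; case: eqVneq => [->|]; rewrite ?(negbTE vS).
  by rewrite !agree_setU1 -andbA andbCA.
move: (marg_pV_gt0 (pa v) u); rewrite /cond !marg_pV_event.
rewrite (prob_solution_ancestral u HvS vpaS) (prob_solution_ancestral u HS paS).
rewrite (eq_bigl _ _ agree_idx).
under eq_bigr => z /andP[zpa /agreeP zS].
  rewrite prob_solves_on_setU1 // zS ?in_setC //; have -> := pot_prob_agree (u v) zpa.
  over.
by rewrite /= -mulr_sumr => D_gt0; rewrite mulfK ?gt_eqF.
Qed.

Variables (Y : {set V}) (alpha : {set V * V}) (a : forall e : V * V, X e.1) (aN : asg X).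
Hypothesis Hcons : consistent pa alpha Y.
Hypothesis HaN : forall A B, (A, B) \in alpha -> aN A = a (A, B).

Definition node_system (o : O) : forall v, asg X -> X v :=
  fun v x => F o v (patch (sources alpha) aN x).

Definition edge_system (o : O) : forall v, asg X -> X v :=
  fun v x => F o v (edge_mix alpha a v x).

Lemma node_system_parent_determined o : parent_determined pa (node_system o).
Proof.
apply: parent_determined_comp (F_parent_determined o) _ => v x y /agreeP xy.
by apply/agreeP => u uv; rewrite !patchE xy.
Qed.

Lemma edge_system_parent_determined o : parent_determined pa (edge_system o).
Proof.
apply: parent_determined_comp (F_parent_determined o) _ => v x y /agreeP xy.
by apply/agreeP => u uv; rewrite !ffunE xy.
Qed.

Lemma edge_node_agree_relevant o x w :
  obs_resp (edge_system o) x -> obs_resp (node_system o) w ->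
  forall r, relevant pa alpha Y r -> x r = w r.
Proof.
move=> /forallP Hx /forallP Hw; apply: (dag_ind HG) => r IH rel_r.
rewrite (eqP (Hx r)) (eqP (Hw r)); apply: (F_parent_determined o); apply/agreeP => u ur.
rewrite ffunE patchE (source_relevant_parent Hcons rel_r ur).
by case: ifP => [/HaN -> // | /negbT nur]; apply: IH ur (relevant_parent rel_r ur nur).
Qed.

Lemma prod_cond_node_mix w :
  \prod_v cond pa (pV P F) v (node_mix pa (sources alpha) aN v w)
  = prob P (fun o => obs_resp (node_system o) w).
Proof.
transitivity (\prod_(v in [set: V]) pot_prob v (patch (sources alpha) aN w) (w v)).
  apply: eq_big => [v|v _]; first by rewrite inE.
  rewrite cond_pot_prob ffunE (negbTE (notin_pa HG v)) /=; apply: pot_prob_agree.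
  by apply/agreeP => u uv; rewrite ffunE patchE uv.
rewrite -Hsw; apply: eq_bigl => o.
by apply/forall_inP/forallP => H v; rewrite eq_sym; [apply: H | move=> _; apply: H].
Qed.

Lemma pY_edge_gformula v :
  pY_edge P F alpha a Y v = gformula pa (pV P F) (sources alpha) aN Y v.
Proof.
rewrite /gformula; under eq_bigr do rewrite prod_cond_node_mix.
rewrite sum_prob_disjoint; last first.
  move=> o w w' _ _ Hw Hw'; exact: (obs_resp_uniq HG (node_system_parent_determined o) Hw Hw').
apply: eq_bigl => o; apply/existsP/existsP.
- case=> x /andP[Hx /agreeP xY].
  have [w Hw] := obs_resp_exists HG (node_system_parent_determined o) v.
  exists w; rewrite Hw andbT; apply/agreeP => y yY.
  by rewrite -(edge_node_agree_relevant Hx Hw (relevant_mem _ _ yY)) xY.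
- case=> w /andP[/agreeP wY Hw].
  have [x Hx] := obs_resp_exists HG (edge_system_parent_determined o) v.
  exists x; apply/andP; split => //; apply/agreeP => y yY.
  by rewrite (edge_node_agree_relevant Hx Hw (relevant_mem _ _ yY)) wY.
Qed.

End SingleWorldModel.

Theorem corollary1 (R : realType) (V : finType) (pa : V -> {set V})
    (X : V -> finType) (Y : {set V}) (alpha : {set V * V})
    (a : forall e : V * V, X e.1) (aN : asg X)
    (HG : acyclic pa)
    (Hlive : live pa alpha Y)
    (Hnc : node_consistent pa alpha Y a)
    (HaN : forall A B, (A, B) \in alpha -> aN A = a (A, B)) :
  (* identification under the SWM (for positive observed distributions) *)
  (forall (O1 O2 : finType) (P1 : {ffun O1 -> R}) (P2 : {ffun O2 -> R})
          (F1 : O1 -> forall v : V, asg X -> X v)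
          (F2 : O2 -> forall v : V, asg X -> X v),
     causal_structure pa P1 F1 -> SWM P1 F1 ->
     causal_structure pa P2 F2 -> SWM P2 F2 ->
     (forall v, 0 < pV P1 F1 v) ->
     (forall v, pV P1 F1 v = pV P2 F2 v) ->
     forall v, pY_edge P1 F1 alpha a Y v = pY_edge P2 F2 alpha a Y v) /\
  (* the extended g-formula *)
  (forall (O : finType) (P : {ffun O -> R})
          (F : O -> forall v : V, asg X -> X v),
     causal_structure pa P F -> SWM P F ->
     (forall v, 0 < pV P F v) ->
     forall v, pY_edge P F alpha a Y v
               = gformula pa (pV P F) (sources alpha) aN Y v).
Proof.
have [_ Hcons _] := Hnc.
split=> [O1 O2 P1 P2 F1 F2 cs1 sw1 cs2 sw2 pos1 eq_pV v | O P F cs sw pos v].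
- have pos2 u : 0 < pV P2 F2 u by rewrite -eq_pV.
  rewrite (pY_edge_gformula HG cs1 sw1 pos1 Hcons HaN).
  rewrite (pY_edge_gformula HG cs2 sw2 pos2 Hcons HaN).
  exact: eq_gformula.
- exact: (pY_edge_gformula HG cs sw pos Hcons HaN v).
Qed.
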